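(* Let $A=\prod_{i=1}^n A_i$ with each $A_i\in\{\mathsf P^1,\mathbb F_2\}$, with the product bicharacter. Let $\Gamma\subseteq 2^{[n]}$ and $P=\mathop{\ast}_{\gamma\in\Gamma}P_\gamma$ with each $P_\gamma$ a probability distribution on $A$ vanishing outside $\{e:\operatorname{supp}(e)\subseteq\gamma\}$. Let $E(a)=\sum_{e\in A}\langle a,e\rangle P(e)$ and assume $E(a)\neq0$ for all $a\in A$. Define the canonical moments $F(a)=\prod_{b\le a}E(b)^{\mu(b,a)}$ with $\mu(b,a)=(-1)^{|a|-|b|}$ for $b\le a$. Then (1) $E(a)=\prod_{b\le a}F(b)$ for all $a\in A$; and (2) if $a\in A$ satisfies $\operatorname{supp}(a)\not\subseteq\gamma$ for all $\gamma\in\Gamma$, then $F(a)=1$.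
   Context: Bicharacter: on $\mathsf P^1=\{I,X,Y,Z\}$ (Paulis modulo phase) $\langle a,b\rangle=\pm1$ according to commutation/anticommutation; on $\mathbb F_2$, $\langle x,y\rangle=(-1)^{xy}$; on $A$ the product over coordinates. $\operatorname{supp}(a)=\{i:a_i\neq I\}$, $|a|=|\operatorname{supp}(a)|$. Substring order: $b\le a$ iff for every $i$ either $b_i=I$ or $b_i=a_i$. Convolution: $(f\ast g)(a)=\sum_b f(b)g(ab^{-1})$. *)

From HB Require Import structures.
From mathcomp Require Import all_boot all_order all_algebra.
Set Implicit Arguments. Unset Strict Implicit. Unset Printing Implicit Defensive.
Import Order.TTheory GRing.Theory Num.Theory.

(* ---------- P^1 = {I,X,Y,Z}: Pauli operators modulo phase ---------- *)
Inductive pauli := PI | PX | PY | PZ.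

Definition pauli_code (p : pauli) : bool * bool :=
  match p with PI => (false, false) | PX => (true, false)
             | PY => (true, true) | PZ => (false, true) end.
Definition pauli_decode (c : bool * bool) : pauli :=
  match c with (false, false) => PI | (true, false) => PX
             | (true, true) => PY | (false, true) => PZ end.
Lemma pauli_codeK : cancel pauli_code pauli_decode. Proof. by case. Qed.
HB.instance Definition _ := Finite.copy pauli (can_type pauli_codeK).

Definition pmul (p q : pauli) : pauli :=
  match p, q with
  | PI, r | r, PI => r
  | PX, PX | PY, PY | PZ, PZ => PI
  | PX, PY | PY, PX => PZ
  | PY, PZ | PZ, PY => PX
  | PZ, PX | PX, PZ => PY
  end.

Definition pcommute (p q : pauli) : bool :=
  (p == PI) || (q == PI) || (p == q).

Inductive kind := KP | KF .

(* a coordinate value: a Pauli (for P^1 factors) or a bit (for F_2 factors) *)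
Definition coord := (pauli + bool)%type.

Definition okc (k : kind) (c : coord) : bool :=
  match k, c with KP, inl _ | KF, inr _ => true | _, _ => false end.

Definition cmul (c d : coord) : coord :=
  match c, d with
  | inl p, inl q => inl (pmul p q)
  | inr x, inr y => inr (x (+) y)
  | _, _ => c (* never used: both arguments lie in the same factor *)
  end.

Definition cid (c : coord) : bool :=
  match c with inl p => p == PI | inr x => ~~ x end.

Definition A (n : nat) (t : 'I_n -> kind) :=
  {f : {ffun 'I_n -> coord} | [forall i, okc (t i) (f i)]}.

Lemma amul_ok n (t : 'I_n -> kind) (a b : A t) :
  [forall i, okc (t i) ([ffun i => cmul (val a i) (val b i)] i)].
Proof.
apply/forallP => i; rewrite ffunE.
have := forallP (valP a) i; have := forallP (valP b) i.
by case: (t i); case: (val a i); case: (val b i).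
Qed.

Definition amul n (t : 'I_n -> kind) (a b : A t) : A t :=
  exist (fun f : {ffun 'I_n -> coord} => [forall i, okc (t i) (f i)]) _ (amul_ok a b).

(* group inverse: every element of A is an involution *)
Definition ainv n (t : 'I_n -> kind) (a : A t) : A t := a.

Definition supp n (t : 'I_n -> kind) (a : A t) : {set 'I_n} :=
  [set i | ~~ cid (val a i)].
Definition weight n (t : 'I_n -> kind) (a : A t) : nat := #|supp a|.

Definition suble n (t : 'I_n -> kind) (b a : A t) : bool :=
  [forall i, cid (val b i) || (val b i == val a i)].

Local Open Scope ring_scope.

Definition cbichar (R : nzRingType) (c d : coord) : R :=
  match c, d with
  | inl p, inl q => if pcommute p q then 1 else -1
  | inr x, inr y => if x && y then -1 else 1
  | _, _ => 1
  end.

Definition bichar (R : nzRingType) n (t : 'I_n -> kind) (a b : A t) : R :=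
  \prod_(i < n) cbichar R (val a i) (val b i).

Definition conv (R : nzRingType) n (t : 'I_n -> kind) (f g : A t -> R) : A t -> R :=
  fun a => \sum_(b : A t) f b * g (amul a (ainv b)).

Definition is_distr (R : numDomainType) n (t : 'I_n -> kind) (f : A t -> R) :=
  (forall e, 0 <= f e) /\ \sum_(e : A t) f e = 1.

Definition aone n (t : 'I_n -> kind) (a : A t) : bool := [forall i, cid (val a i)].
Definition delta1 (R : nzRingType) n (t : 'I_n -> kind) : A t -> R :=
  fun a => if aone a then 1 else 0.

Definition convprod (R : nzRingType) n (t : 'I_n -> kind)
    (Gamma : {set {set 'I_n}}) (P : {set 'I_n} -> A t -> R) : A t -> R :=
  \big[@conv R n t / @delta1 R n t]_(g in Gamma) P g.

Definition moment (R : nzRingType) n (t : 'I_n -> kind) (P : A t -> R) : A t -> R :=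
  fun a => \sum_(e : A t) bichar R a e * P e.

Definition mobius n (t : 'I_n -> kind) (b a : A t) : int :=
  (-1) ^+ (weight a - weight b)%N.

Definition canon (R : fieldType) n (t : 'I_n -> kind) (E : A t -> R) : A t -> R :=
  fun a => \prod_(b : A t | suble b a) E b ^ mobius b a.

(* The moment map E is a character transform, so it turns the convolution
   product into the pointwise product E = prod_gamma E_gamma, and each E_gamma
   only sees the coordinates in gamma.  Both claims then come from one
   sign-reversing involution on the interval below a: at a coordinate i with
   a_i <> I, swap b_i between I and a_i.  This changes |b| by one, so the
   Moebius weights of paired terms cancel, which gives Moebius inversion (1);
   when i lies outside gamma it also leaves E_gamma unchanged, so the factors
   of the canonical moment of E_gamma cancel, which gives (2). *)
From Pilot Require Import Defs.
From HB Require Import structures.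
From mathcomp Require Import all_boot all_order all_algebra.
Import Order.TTheory GRing.Theory Num.Theory.
Set Implicit Arguments. Unset Strict Implicit. Unset Printing Implicit Defensive.
Local Open Scope ring_scope.

Lemma big_cancel_involution (R : Type) (idx : R) (op : Monoid.com_law idx)
    (I : finType) (P Q : pred I) (tau : I -> I) (F : I -> R) :
  involutive tau -> (forall i, P i -> P (tau i)) ->
  (forall i, P i -> Q (tau i) = ~~ Q i) ->
  (forall i, P i -> Q i -> op (F i) (F (tau i)) = idx) ->
  \big[op/idx]_(i | P i) F i = idx.
Proof.
move=> tauK Ptau Qtau Fpair.
rewrite (bigID Q) /= [X in op _ X](reindex_inj (inv_inj tauK)) /=.
rewrite [X in op _ X](eq_bigl (fun i => P i && Q i)) => [|i]; last first.
  case Pi: (P i); first by rewrite Ptau // Qtau // negbK.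
  by apply/negbTE/nandP; left; apply: contraFN Pi => /Ptau; rewrite tauK.
by rewrite -big_split big1 // => i /andP[]; apply: Fpair.
Qed.

Lemma prodfXzr (R : fieldType) (I : finType) (P : pred I) (x : R) (f : I -> int) :
  x != 0 -> \prod_(i | P i) x ^ f i = x ^ (\sum_(i | P i) f i).
Proof. by move=> x_neq0; rewrite (big_morph _ (fun m k => expfzDr m k x_neq0) (expr0z x)). Qed.

Lemma prodfXzl (R : fieldType) (I : finType) (P : pred I) (F : I -> R) (z : int) :
  \prod_(i | P i) F i ^ z = (\prod_(i | P i) F i) ^ z.
Proof. by rewrite (big_morph _ (fun u v => expfzMl u v z) (exp1rz _ z)). Qed.

Lemma signSl (m k : nat) : (k <= m)%N -> (-1) ^+ (m.+1 - k) = - (-1) ^+ (m - k) :> int.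
Proof. by move=> le_km; rewrite subSn // exprS mulN1r. Qed.

Lemma signSr (m k : nat) : (k < m)%N -> (-1) ^+ (m - k.+1) = - (-1) ^+ (m - k) :> int.
Proof. by move=> lt_km; rewrite -(subnSK lt_km) exprS mulN1r opprK. Qed.

Definition idc (k : kind) : Defs.coord := match k with KP => inl PI | KF => inr false end.

Lemma cid_idc k : cid (idc k). Proof. by case: k. Qed.

Lemma okc_idc k : okc k (idc k). Proof. by case: k. Qed.

Lemma cmulc1 k c : okc k c -> cmul c (idc k) = c.
Proof. by case: k; case: c => [[]|[]]. Qed.

Lemma cmul1c k c : okc k c -> cmul (idc k) c = c.
Proof. by case: k; case: c => [[]|[]]. Qed.

Lemma cmulcc k c : okc k c -> cmul c c = idc k.
Proof. by case: k; case: c => [[]|[]]. Qed.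

Lemma cbichar_cidr (R : nzRingType) c d : cid d -> cbichar R c d = 1.
Proof.
case: c => [p|x]; case: d => [q|y] //=; first by move/eqP->; rewrite /pcommute eqxx orbT.
by move/negbTE->; rewrite andbF.
Qed.

Section Group.
Variables (n : nat) (t : 'I_n -> kind).
Implicit Types (a b c e : A t) (i j : 'I_n).

Lemma okA a i : okc (t i) (val a i).
Proof. exact: (forallP (valP a) i). Qed.

Lemma cidE a i : cid (val a i) = (val a i == idc (t i)).
Proof.
apply/idP/eqP => [|->]; last exact: cid_idc.
by have := okA a i; case: (t i); case: (val a i) => [[]|[]].
Qed.

Lemma amulK b : involutive (fun a => amul a b).
Proof.
move=> a; apply: val_inj; apply/ffunP => i; rewrite /= !ffunE.
have := okA a i; have := okA b i.
by case: (t i); case: (val a i) => [[]|[]]; case: (val b i) => [[]|[]].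
Qed.

Lemma bichar_mulr (R : comNzRingType) a e b :
  bichar R a (amul e b) = bichar R a e * bichar R a b.
Proof.
rewrite /bichar -big_split; apply: eq_bigr => i _ /=; rewrite ffunE.
have := okA a i; have := okA e i; have := okA b i.
by case: (t i); case: (val a i) => [[]|[]]; case: (val e i) => [[]|[]];
  case: (val b i) => [[]|[]] => //= _ _ _; rewrite ?mulr1 ?mul1r ?mulrNN ?mulr1.
Qed.

Lemma restrict_ok a (S : {set 'I_n}) :
  [forall i, okc (t i) ([ffun j => if j \in S then val a j else idc (t j)] i)].
Proof. by apply/forallP => i; rewrite ffunE; case: ifP => _; [apply: okA | apply: okc_idc]. Qed.

Definition restrict a (S : {set 'I_n}) : A t :=
  exist (fun f : {ffun 'I_n -> Defs.coord} => [forall i, okc (t i) (f i)]) _ (restrict_ok a S).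

Lemma val_restrict a S i : val (restrict a S) i = if i \in S then val a i else idc (t i).
Proof. by rewrite /= ffunE. Qed.

Lemma aoneP a e : aone e = (e == restrict a set0).
Proof.
apply/forallP/eqP => [e1|-> i]; last by rewrite val_restrict inE cid_idc.
apply: val_inj; apply/ffunP => i; rewrite -[LHS]/(val e i) val_restrict inE.
by apply/eqP; rewrite -cidE.
Qed.

Lemma moment_delta1 (R : nzRingType) a : moment (@delta1 R n t) a = 1.
Proof.
rewrite /moment (bigD1 (restrict a set0)) //= big1 => [|e]; last first.
  by rewrite /delta1 (aoneP a) => /negbTE->; rewrite mulr0.
rewrite /delta1 (aoneP a) eqxx mulr1 addr0 /bichar big1 // => i _.
by apply: cbichar_cidr; rewrite val_restrict inE cid_idc.
Qed.

Lemma moment_conv (R : comNzRingType) (f g : A t -> R) a :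
  moment (conv f g) a = moment f a * moment g a.
Proof.
rewrite /moment /conv; under eq_bigr do rewrite mulr_sumr.
rewrite exchange_big /= mulr_suml; apply: eq_bigr => b _.
rewrite (reindex_inj (inv_inj (amulK b))) /= mulr_sumr.
apply: eq_bigr => e _; rewrite /ainv amulK bichar_mulr.
by rewrite [RHS]mulrACA [bichar R a b * _]mulrC.
Qed.

Lemma moment_convprod (R : comNzRingType) (Gamma : {set {set 'I_n}})
    (Pg : {set 'I_n} -> A t -> R) a :
  moment (convprod Gamma Pg) a = \prod_(g in Gamma) moment (Pg g) a.
Proof.
exact: (big_morph (fun f => moment f a) (fun f g => moment_conv f g a) (moment_delta1 _ a)).
Qed.

Lemma moment_local (R : nzRingType) (P : A t -> R) (g : {set 'I_n}) b b' :
  (forall e, ~~ (supp e \subset g) -> P e = 0) ->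
  {in g, forall j, val b j = val b' j} -> moment P b = moment P b'.
Proof.
move=> P_supp bb'; apply: eq_bigr => e _.
have [sub_eg|] := boolP (supp e \subset g); last by move/P_supp->; rewrite !mulr0.
congr (_ * _); apply: eq_bigr => j _.
have [/bb'->//|jNg] := boolP (j \in g).
have : j \notin supp e by apply: contra jNg => /(subsetP sub_eg).
by rewrite inE negbK => cid_ej; rewrite !cbichar_cidr.
Qed.

Lemma suble_cid b a i : suble b a -> val b i = idc (t i) \/ val b i = val a i.
Proof. by move/forallP/(_ i)/orP => [|/eqP]; [rewrite cidE => /eqP|]; [left|right]. Qed.

Lemma suble_refl a : suble a a.
Proof. by apply/forallP => i; rewrite eqxx orbT. Qed.

Lemma suble_trans c b a : suble c b -> suble b a -> suble c a.
Proof.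
move=> /forallP le_cb /forallP le_ba; apply/forallP => i.
by case/orP: (le_cb i) => [->//|/eqP->]; apply: le_ba.
Qed.

Lemma suble_anti b a : suble b a -> suble a b -> b = a.
Proof.
move=> le_ba le_ab; apply: val_inj; apply/ffunP => i.
by case: (suble_cid i le_ba) => // bi; case: (suble_cid i le_ab) => // ->.
Qed.

Lemma suble_weight b a : suble b a -> (weight b <= weight a)%N.
Proof.
move=> le_ba; apply/subset_leq_card/subsetP => i; rewrite !inE.
by case: (suble_cid i le_ba) => ->; rewrite ?cid_idc.
Qed.

Lemma suble_neq c a : suble c a -> c != a -> exists i, cid (val c i) && ~~ cid (val a i).
Proof.
move=> le_ca neq_ca; have /existsP[i neq_i] : [exists i, val c i != val a i].
  apply: contraNT neq_ca => /existsPn all_eq.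
  by apply/eqP/val_inj/ffunP => j; apply/eqP/negPn/all_eq.
exists i; case: (suble_cid i le_ca) => ci; last by rewrite ci eqxx in neq_i.
by rewrite cidE ci eqxx /= cidE -ci eq_sym.
Qed.

Section Flip.
Variables (a : A t) (i : 'I_n).
Hypothesis ai_neq1 : ~~ cid (val a i).

Definition flip b := amul b (restrict a [set i]).

Lemma flipK : involutive flip.
Proof. exact: amulK. Qed.

Lemma val_flip b j : j != i -> val (flip b) j = val b j.
Proof. by move=> ji; rewrite /= ffunE val_restrict inE (negbTE ji) (cmulc1 (okA b j)). Qed.

Lemma val_flip_at b : suble b a ->
  val (flip b) i = if cid (val b i) then val a i else idc (t i).
Proof.
rewrite /= ffunE val_restrict set11 => /(suble_cid i)[]->.
  by rewrite cid_idc (cmul1c (okA a i)).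
by rewrite (negbTE ai_neq1) (cmulcc (okA a i)).
Qed.

Lemma cid_flip b : suble b a -> cid (val (flip b) i) = ~~ cid (val b i).
Proof.
by move=> le_ba; rewrite val_flip_at //; case: ifP => _; rewrite ?cid_idc ?(negbTE ai_neq1).
Qed.

Lemma flip_suble b : suble b a -> suble (flip b) a.
Proof.
move=> le_ba; apply/forallP => j; have [->|ji] := eqVneq j i.
  by rewrite val_flip_at //; case: ifP; rewrite ?eqxx ?orbT ?cid_idc.
by rewrite val_flip //; apply: (forallP le_ba).
Qed.

Lemma suble_flip c b : cid (val c i) -> suble c b -> suble c (flip b).
Proof.
move=> ci le_cb; apply/forallP => j; have [->|ji] := eqVneq j i; first by rewrite ci.
by rewrite val_flip //; apply: (forallP le_cb).
Qed.

Lemma supp_flip b : suble b a -> cid (val b i) -> supp (flip b) = i |: supp b.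
Proof.
move=> le_ba bi; apply/setP => j; rewrite in_setU1 !inE.
by have [->|ji] := eqVneq j i; [rewrite cid_flip // bi | rewrite val_flip].
Qed.

Lemma weight_flip b : suble b a -> cid (val b i) -> weight (flip b) = (weight b).+1.
Proof. by move=> le_ba bi; rewrite /weight supp_flip // cardsU1 inE bi. Qed.

End Flip.

Lemma sum_mobius c a : suble c a ->
  \sum_(b | suble b a && suble c b) mobius c b = (c == a)%:R.
Proof.
move=> le_ca; have [->|neq_ca] := eqVneq c a.
  rewrite (eq_bigl (pred1 a)) ?big_pred1_eq /mobius ?subnn // => b /=.
  by apply/andP/eqP => [[]|->]; [apply: suble_anti | split; apply: suble_refl].
have [i /andP[ci ai]] := suble_neq le_ca neq_ca.
apply: (big_cancel_involution (tau := flip a i) (Q := fun b => cid (val b i))).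
- exact: flipK.
- by move=> b /andP[le_ba le_cb]; rewrite flip_suble ?suble_flip.
- by move=> b /andP[le_ba _]; apply: cid_flip.
- move=> b /andP[le_ba le_cb] bi.
  by rewrite /mobius weight_flip // signSl ?suble_weight //; apply: subrr.
Qed.

Lemma prod_canon (R : fieldType) (E : A t -> R) : (forall b, E b != 0) ->
  forall a, E a = \prod_(b | suble b a) canon E b.
Proof.
move=> E_neq0 a; rewrite /canon (exchange_big_dep (fun c => suble c a)) /=; last first.
  by move=> b c le_ba le_cb; apply: suble_trans le_cb le_ba.
under eq_bigr => c le_ca do rewrite prodfXzr // sum_mobius //.
rewrite (bigD1 a) ?suble_refl //= eqxx expr1z big1 ?mulr1 // => c /andP[_ /negbTE->].
exact: expr0z.
Qed.

Lemma canon_prod (R : fieldType) (I : finType) (S : pred I) (E : I -> A t -> R) a :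
  canon (fun b => \prod_(k | S k) E k b) a = \prod_(k | S k) canon (E k) a.
Proof. by rewrite /canon exchange_big; apply: eq_bigr => b _; rewrite prodfXzl. Qed.

Lemma canon_local (R : fieldType) (E : A t -> R) (g : {set 'I_n}) a :
  (forall b, E b != 0) -> (forall b b', {in g, forall j, val b j = val b' j} -> E b = E b') ->
  ~~ (supp a \subset g) -> canon E a = 1.
Proof.
move=> E_neq0 E_local /subsetPn[i]; rewrite inE => ai iNg.
apply: (big_cancel_involution (tau := flip a i) (Q := fun b => cid (val b i))).
- exact: flipK.
- exact: flip_suble.
- exact: cid_flip.
- move=> b le_ba bi.
  have -> : E (flip a i b) = E b.
    by apply: E_local => j jg; apply: val_flip; apply: contraNneq iNg => <-.
  have lt_ba : (weight b < weight a)%N.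
    by rewrite -(weight_flip ai le_ba bi) suble_weight ?flip_suble.
  by rewrite /mobius weight_flip // signSr //= -expfzDr // subrr expr0z.
Qed.

End Group.

Theorem lemma5 (R : realFieldType) (n : nat) (t : 'I_n -> kind)
    (Gamma : {set {set 'I_n}}) (Pg : {set 'I_n} -> A t -> R) :
  (forall g, g \in Gamma -> is_distr (Pg g)) ->
  (forall g, g \in Gamma -> forall e : A t, ~~ (supp e \subset g) -> Pg g e = 0) ->
  let P := convprod Gamma Pg in
  let E := moment P in
  (forall a : A t, E a != 0) ->
  let F := canon E in
  (forall a : A t, E a = \prod_(b : A t | suble b a) F b) /\
  (forall a : A t, (forall g, g \in Gamma -> ~~ (supp a \subset g)) -> F a = 1).
Proof.
move=> _ Pg_local P E E_neq0 F; split; first exact: prod_canon.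
have E_prod b : E b = \prod_(g in Gamma) moment (Pg g) b by apply: moment_convprod.
have Eg_neq0 g : g \in Gamma -> forall b, moment (Pg g) b != 0.
  by move=> gG b; move: (E_neq0 b); rewrite E_prod => /prodf_neq0; apply.
move=> a a_nonlocal.
have -> : F a = \prod_(g in Gamma) canon (moment (Pg g)) a.
  by rewrite -canon_prod; apply: eq_bigr => b _; rewrite E_prod.
rewrite big1 // => g gG; apply: (canon_local (g := g)); [exact: Eg_neq0| |exact: a_nonlocal].
by move=> b b'; apply: moment_local; apply: Pg_local.
Qed.
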